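(* Fix $b\in(0,1/9)$. For $t\in(0,1/9)$ let $\mathcal S_t$ be the system on $\mathbb R$ given by $S_{1,t}(x)=tx$, $S_2(x)=bx$, $S_3(x)=(x+8)/9$, with attractor $K_t$. Then for Lebesgue almost all $t\in(0,1/9)$, $$S_{1,t}(K_t)\cap S_2(K_t)=S_{1,t}S_2(K_t).$$
   Context: The attractor $K_t$ is the unique nonempty compact set with $K_t=S_{1,t}(K_t)\cup S_2(K_t)\cup S_3(K_t)$. *)

From Stdlib Require Import Reals Rtopology.
Open Scope R_scope.

Definition img (f : R -> R) (A : R -> Prop) : R -> Prop :=
  fun y => exists x, A x /\ y = f x.

Definition S1 (t : R) (x : R) : R := t * x.
Definition S2 (b : R) (x : R) : R := b * x.
Definition S3 (x : R) : R := (x + 8) / 9.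

(* K is the attractor of S_t: a nonempty compact set with
   K = S_{1,t}(K) ∪ S_2(K) ∪ S_3(K)  (unique by Hutchinson's theorem). *)
Definition is_attractor (b t : R) (K : R -> Prop) : Prop :=
  (exists x, K x) /\ compact K /\
  (forall y, K y <-> (img (S1 t) K y \/ img (S2 b) K y \/ img S3 K y)).

Definition lebesgue_null (N : R -> Prop) : Prop :=
  forall eps : R, 0 < eps ->
    exists a c : nat -> R,
      (forall n, a n <= c n) /\
      (forall x, N x -> exists n, a n <= x <= c n) /\
      (forall n, sum_f_R0 (fun k => c k - a k) n <= eps).

(* If t x1 = b x2 with x1, x2 in K_t, strip the maximal power of S_{1,t} from x1 and of S_2
   from x2: x1 = t^k y1 with y1 in S_2(K_t) or S_3(K_t), and x2 = b^m y2 with y2 in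
   S_{1,t}(K_t) or S_3(K_t).  Unless both y1 and y2 lie in S_3(K_t), the point t x1 already
   lies in S_{1,t} S_2(K_t).  The remaining coincidences t^(k+1) (w1 + 8) = b^(m+1) (w2 + 8)
   with w1, w2 in K_t happen only for a null set of t: cover K_t by the 3^n cylinders of
   depth n; for a fixed pair of cylinders the difference of the two sides increases in t at
   rate at least 7 t^k >= 56 b^(m+1) (transversality), so the admissible t form a set of
   diameter O(size of the cylinders), and the cylinder sizes sum to (2/9 + b)^n < 3^-n. *)

From Stdlib Require Import Reals Rtopology.
From Stdlib Require Import ClassicalEpsilon Classical List Lra Lia Arith.Cantor.
Import ListNotations.
Open Scope R_scope.

Definition sumL {A : Type} (f : A -> R) (l : list A) : R :=
  fold_right (fun x s => f x + s) 0 l.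

Lemma sumL_cons {A : Type} (f : A -> R) a l : sumL f (a :: l) = f a + sumL f l.
Proof. reflexivity. Qed.

Lemma sumL_app {A : Type} (f : A -> R) l1 l2 : sumL f (l1 ++ l2) = sumL f l1 + sumL f l2.
Proof. induction l1 as [|a l1 IH]; cbn [app]; rewrite ?sumL_cons, ?IH; simpl; lra. Qed.

Lemma sumL_ext {A : Type} (f g : A -> R) l : (forall x, f x = g x) -> sumL f l = sumL g l.
Proof. intros Hfg; induction l as [|a l IH]; rewrite ?sumL_cons, ?IH, ?Hfg; reflexivity. Qed.

Lemma sumL_add {A : Type} (f g : A -> R) l : sumL (fun x => f x + g x) l = sumL f l + sumL g l.
Proof. induction l as [|a l IH]; rewrite ?sumL_cons, ?IH; simpl; lra. Qed.

Lemma sumL_scal {A : Type} (f : A -> R) c l : sumL (fun x => c * f x) l = c * sumL f l.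
Proof. induction l as [|a l IH]; rewrite ?sumL_cons, ?IH; simpl; lra. Qed.

Lemma sumL_map {A B : Type} (f : B -> R) (g : A -> B) l :
  sumL f (map g l) = sumL (fun x => f (g x)) l.
Proof. induction l as [|a l IH]; cbn [map]; rewrite ?sumL_cons, ?IH; reflexivity. Qed.

Lemma sumL_flat_map {A B : Type} (f : B -> R) (g : A -> list B) l :
  sumL f (flat_map g l) = sumL (fun x => sumL f (g x)) l.
Proof.
  induction l as [|a l IH]; cbn [flat_map]; rewrite ?sumL_app, ?sumL_cons, ?IH; reflexivity.
Qed.

Lemma sumL_const {A : Type} c (l : list A) : sumL (fun _ => c) l = INR (length l) * c.
Proof. induction l as [|a l IH]; cbn [length]; rewrite ?sumL_cons, ?IH, ?S_INR; simpl; lra. Qed.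

Lemma sumL_list_prod {A B : Type} (f : A -> R) (g : B -> R) l l' :
  sumL (fun p => f (fst p) + g (snd p)) (list_prod l l') =
  INR (length l') * sumL f l + INR (length l) * sumL g l'.
Proof.
  induction l as [|a l IH]; cbn [list_prod length]; [simpl; lra|].
  rewrite sumL_app, IH, sumL_map, sumL_cons. cbn beta.
  rewrite sumL_add. cbn [fst snd]. rewrite sumL_const, S_INR. change (fun x => g x) with g. lra.
Qed.

Lemma sumL_nonneg {A : Type} (f : A -> R) l : (forall a, In a l -> 0 <= f a) -> 0 <= sumL f l.
Proof.
  induction l as [|a l IH]; intros Hl; [simpl; lra|].
  rewrite sumL_cons. pose proof (Hl a (or_introl eq_refl)).
  assert (0 <= sumL f l) by (apply IH; auto with datatypes). lra.
Qed.

Lemma sum_f_R0_nth_le_sumL {A : Type} (f : A -> R) (d : A) l M :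
  f d = 0 -> (forall a, In a l -> 0 <= f a) ->
  sum_f_R0 (fun n => f (nth n l d)) M <= sumL f l.
Proof.
  intros Hd; revert M; induction l as [|a l IH]; intros M Hl.
  - rewrite (sum_eq _ (fun _ => 0)) by (intros [|i] _; exact Hd).
    rewrite sum_cte; simpl; lra.
  - pose proof (Hl a (or_introl eq_refl)) as Ha.
    assert (Hrest : forall M, sum_f_R0 (fun n => f (nth n l d)) M <= sumL f l)
      by (intro; apply IH; auto with datatypes).
    rewrite sumL_cons. destruct M as [|M].
    + assert (0 <= sumL f l) by (apply sumL_nonneg; auto with datatypes). simpl; lra.
    + rewrite decomp_sum by lia. simpl pred. specialize (Hrest M). simpl nth. lra.
Qed.

Definition interval_length (p : R * R) : R := snd p - fst p.

Definition interval_cover (N : R -> Prop) (l : list (R * R)) : Prop :=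
  (forall p, In p l -> fst p <= snd p) /\
  (forall x, N x -> exists p, In p l /\ fst p <= x <= snd p).

Definition jordan_null (N : R -> Prop) : Prop :=
  forall eps, 0 < eps -> exists l, interval_cover N l /\ sumL interval_length l <= eps.

Fixpoint concat_upto {A : Type} (C : nat -> list A) (n : nat) : list A :=
  match n with O => [] | S n => concat_upto C n ++ C n end.

Lemma concat_upto_prefix {A : Type} (C : nat -> list A) i j :
  (i <= j)%nat -> exists r, concat_upto C j = concat_upto C i ++ r.
Proof.
  induction 1 as [|j _ [r Hr]]; [exists []; symmetry; apply app_nil_r|].
  exists (r ++ C j); simpl; rewrite Hr, app_assoc; reflexivity.
Qed.

Lemma nth_concat_upto {A : Type} (C : nat -> list A) i j n d :
  (i <= j)%nat -> (n < length (concat_upto C i))%nat ->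
  nth n (concat_upto C j) d = nth n (concat_upto C i) d.
Proof. intros Hij Hn; destruct (concat_upto_prefix C i j Hij) as [r ->]; apply app_nth1, Hn. Qed.

Lemma length_concat_upto {A : Type} (C : nat -> list A) n :
  (forall j, C j <> []) -> (n <= length (concat_upto C n))%nat.
Proof.
  intros HC; induction n as [|n IH]; simpl; [lia|].
  rewrite length_app; destruct (C n) eqn:E; [contradiction (HC n E)|simpl; lia].
Qed.

Lemma In_concat_upto {A : Type} (C : nat -> list A) n a :
  In a (concat_upto C n) -> exists j, In a (C j).
Proof.
  induction n as [|n IH]; simpl; [tauto|].
  intros Ha; apply in_app_or in Ha as [Ha|Ha]; [exact (IH Ha)|exists n; exact Ha].
Qed.

(* The n-th interval of the combined cover is the n-th element of the concatenation of the
   first n+1 covers, a list long enough because no cover is empty. *)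
Lemma lebesgue_cover_of_concat_upto (N : nat -> R -> Prop) (C : nat -> list (R * R)) eps :
  (forall j, C j <> []) -> (forall j, interval_cover (N j) (C j)) ->
  (forall n, sumL interval_length (concat_upto C n) <= eps) ->
  exists a c : nat -> R, (forall n, a n <= c n) /\
    (forall x, (exists j, N j x) -> exists n, a n <= x <= c n) /\
    (forall n, sum_f_R0 (fun k => c k - a k) n <= eps).
Proof.
  intros HCne HC Htotal.
  set (I n := nth n (concat_upto C (S n)) (0, 0)).
  assert (HI : forall n M, (n < length (concat_upto C M))%nat ->
                           I n = nth n (concat_upto C M) (0, 0)).
  { intros n M Hn; unfold I; destruct (Nat.le_ge_cases (S n) M).
    - symmetry; apply nth_concat_upto; [assumption|].
      pose proof (length_concat_upto C (S n) HCne); lia.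
    - apply nth_concat_upto; assumption. }
  exists (fun n => fst (I n)), (fun n => snd (I n)). split; [|split].
  - intro n. destruct (In_concat_upto C (S n) (I n)) as [j Hj]; [|exact (proj1 (HC j) _ Hj)].
    apply nth_In. pose proof (length_concat_upto C (S n) HCne); lia.
  - intros x [j Hx]. destruct (proj2 (HC j) x Hx) as [p [Hp Hxp]].
    destruct (In_nth _ p (0, 0) Hp) as [q [Hq <-]].
    pose proof (length_concat_upto C j HCne).
    exists (length (concat_upto C j) + q)%nat.
    rewrite (HI _ (S j)) by (cbn [concat_upto]; rewrite length_app; lia); cbn [concat_upto].
    rewrite app_nth2, Nat.add_comm, Nat.add_sub by lia; exact Hxp.
  - intro M. rewrite (sum_eq _ (fun n => interval_length (nth n (concat_upto C (S M)) (0, 0))))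
      by (intros n Hn; rewrite <- HI; [reflexivity|];
          pose proof (length_concat_upto C (S M) HCne); lia).
    eapply Rle_trans; [apply sum_f_R0_nth_le_sumL | apply Htotal].
    + unfold interval_length; simpl; lra.
    + intros p Hp. destruct (In_concat_upto C _ p Hp) as [j Hj].
      pose proof (proj1 (HC j) p Hj); unfold interval_length; lra.
Qed.

Lemma lebesgue_null_union_jordan_null (N : nat -> R -> Prop) :
  (forall j, jordan_null (N j)) -> lebesgue_null (fun x => exists j, N j x).
Proof.
  intros HN eps Heps.
  assert (Hcov : forall j, { l | interval_cover (N j) l /\
                             sumL interval_length l <= eps * (/2) ^ S j }).
  { intro j; apply constructive_indefinite_description, HN.
    apply Rmult_lt_0_compat; [lra | apply pow_lt; lra]. }
  apply (lebesgue_cover_of_concat_upto N (fun j => (0, 0) :: proj1_sig (Hcov j))).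
  - discriminate.
  - intro j; destruct (proj2_sig (Hcov j)) as [[Hwf Hcv] _]; split.
    + intros p [<-|Hp]; [simpl; lra | exact (Hwf p Hp)].
    + intros x Hx; destruct (Hcv x Hx) as [p [Hp Hxp]]; exists p; split; [right|]; assumption.
  - assert (Hgeom : forall n, sumL interval_length
              (concat_upto (fun j => (0, 0) :: proj1_sig (Hcov j)) n) <= eps * (1 - (/2) ^ n)).
    { induction n as [|n IH]; [simpl; lra|].
      cbn [concat_upto]; rewrite sumL_app, sumL_cons.
      pose proof (proj2 (proj2_sig (Hcov n))).
      replace (interval_length (0, 0)) with 0 by (unfold interval_length; simpl; lra).
      cbn [pow] in *; lra. }
    intro n; pose proof (Hgeom n).
    assert (0 < eps * (/2) ^ n) by (apply Rmult_lt_0_compat; [lra | apply pow_lt; lra]). lra.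
Qed.

Lemma jordan_null_of_diameter_bounds {I : Type} (N : R -> Prop) (E : I -> R -> Prop) (d : I -> R) :
  (forall i, 0 <= d i) ->
  (forall i x y, E i x -> E i y -> x <= y -> y - x <= d i) ->
  (forall eps, 0 < eps ->
     exists l, (forall x, N x -> exists i, In i l /\ E i x) /\ sumL d l <= eps) ->
  jordan_null N.
Proof.
  intros Hd Hdiam Hcov eps Heps.
  destruct (Hcov (eps / 2)) as [l [Hl Hs]]; [lra|].
  set (c i := epsilon (inhabits 0) (E i)).
  exists (map (fun i => (c i - d i, c i + d i)) l). split; [split|].
  - intros p Hp; apply in_map_iff in Hp as [i [<- _]]; cbn [fst snd]; specialize (Hd i); lra.
  - intros x Hx. destruct (Hl x Hx) as [i [Hi Ex]].
    exists (c i - d i, c i + d i).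
    split; [exact (in_map (fun i => (c i - d i, c i + d i)) l i Hi)|].
    assert (Ec : E i (c i)) by (apply epsilon_spec; exists x; exact Ex).
    cbn [fst snd]; destruct (Rle_or_lt x (c i)).
    + pose proof (Hdiam i x (c i) Ex Ec ltac:(lra)); pose proof (Hd i); lra.
    + pose proof (Hdiam i (c i) x Ec Ex ltac:(lra)); pose proof (Hd i); lra.
  - rewrite sumL_map, (sumL_ext _ (fun i => 2 * d i)), sumL_scal
      by (intro; unfold interval_length; cbn [fst snd]; lra).
    lra.
Qed.

Inductive branch := br1 | br2 | br3.

Definition branch_map (b t : R) (i : branch) : R -> R :=
  match i with br1 => S1 t | br2 => S2 b | br3 => S3 end.

Definition branch_ratio (b t : R) (i : branch) : R :=
  match i with br1 => t | br2 => b | br3 => /9 end.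

Definition word_map (b t : R) (u : list branch) (y : R) : R := fold_right (branch_map b t) y u.

Definition word_ratio (b t : R) (u : list branch) : R :=
  fold_right (fun i r => branch_ratio b t i * r) 1 u.

Fixpoint words (n : nat) : list (list branch) :=
  match n with
  | O => [[]]
  | S n => flat_map (fun u => [br1 :: u; br2 :: u; br3 :: u]) (words n)
  end.

Lemma In_words_length u : In u (words (length u)).
Proof.
  induction u as [|i u IH]; [left; reflexivity|].
  apply in_flat_map; exists u; split; [exact IH | destruct i; simpl; tauto].
Qed.

Lemma length_words n : INR (length (words n)) = 3 ^ n.
Proof.
  assert (Hlen : forall l : list (list branch), INR (length l) = sumL (fun _ => 1) l)
    by (intro; rewrite sumL_const; ring).
  induction n as [|n IH]; [reflexivity|].
  rewrite Hlen in *; cbn [words pow]; rewrite sumL_flat_map.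
  rewrite (sumL_ext _ (fun _ => 3 * 1)) by (intro; unfold sumL; simpl; lra).
  rewrite sumL_scal, IH; reflexivity.
Qed.

Lemma sumL_word_ratio b t n : sumL (word_ratio b t) (words n) = (t + b + /9) ^ n.
Proof.
  induction n as [|n IH]; [simpl; lra|].
  cbn [words pow]; rewrite sumL_flat_map, <- IH, <- sumL_scal.
  apply sumL_ext; intro u; unfold sumL, word_ratio; simpl; lra.
Qed.

Lemma word_map_affine b t u y : word_map b t u y = word_map b t u 0 + word_ratio b t u * y.
Proof.
  induction u as [|i u IH]; [simpl; lra|].
  unfold word_map, word_ratio in *; simpl; rewrite IH.
  destruct i; cbn [branch_map branch_ratio]; unfold S1, S2, S3; field.
Qed.

Section WordMaps.
Variable b : R.
Hypothesis hb : 0 <= b <= 1/9.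

Lemma word_map_unit t u y : 0 <= t <= 1/9 -> 0 <= y <= 1 -> 0 <= word_map b t u y <= 1.
Proof.
  intros ht hy; induction u as [|i u IH]; simpl; [lra|].
  destruct i; cbn [branch_map]; unfold S1, S2, S3; split; nra.
Qed.

Lemma word_ratio_bounds t u : 0 <= t <= 1/9 -> 0 <= word_ratio b t u <= word_ratio b (1/9) u.
Proof. intros ht; induction u as [|i u IH]; simpl; [lra | destruct i; simpl; split; nra]. Qed.

Lemma word_map_lipschitz t1 t2 u y : 0 <= t1 <= t2 -> t2 <= 1/9 -> 0 <= y <= 1 ->
  - (9/8 * (t2 - t1)) <= word_map b t2 u y - word_map b t1 u y <= 9/8 * (t2 - t1).
Proof.
  intros ht12 ht2 hy; induction u as [|i u IH]; simpl; [lra|].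
  pose proof (word_map_unit t1 u y ltac:(lra) hy) as X1.
  pose proof (word_map_unit t2 u y ltac:(lra) hy) as X2.
  unfold word_map in *.
  set (x1 := fold_right (branch_map b t1) y u) in *.
  set (x2 := fold_right (branch_map b t2) y u) in *.
  destruct i; cbn [branch_map]; unfold S1, S2, S3.
  - (* t2 x2 - t1 x1 = (t2 - t1) x2 + t1 (x2 - x1) *)
    split; nra.
  - split; nra.
  - split; lra.
Qed.

End WordMaps.

(* [exceptional] relaxed to the cylinders of the words [u] and [v]: the points of the attractor
   are only known to lie in [0, 1]. *)
Definition coincidence (b : R) (k m : nat) (u v : list branch) (t : R) : Prop :=
  0 <= t <= 1/9 /\ exists y1 y2, 0 <= y1 <= 1 /\ 0 <= y2 <= 1 /\
    t ^ S k * (word_map b t u y1 + 8) = b ^ S m * (word_map b t v y2 + 8).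

Section Transversality.
Variables (b : R) (k m : nat) (u v : list branch).
Hypothesis hb : 0 < b < 1/9.

Let B := b ^ S m.
Let Ru := word_ratio b (1/9) u.
Let Rv := word_ratio b (1/9) v.
Let gap (t : R) := t ^ S k * (word_map b t u 0 + 8) - B * word_map b t v 0.

Let B_bounds : 0 < B <= 1.
Proof.
  split; [apply pow_lt; lra|].
  rewrite <- (pow1 (S m)); apply pow_incr; lra.
Qed.

Lemma coincidence_gap t :
  coincidence b k m u v t -> 8 * B <= 9 * t ^ S k /\ 8 * B - Ru <= gap t <= 8 * B + Rv.
Proof.
  intros [ht [y1 [y2 [hy1 [hy2 E]]]]].
  assert (hb' : 0 <= b <= 1/9) by lra.
  pose proof (word_map_unit b hb' t u y1 ht hy1) as Xu.
  pose proof (word_map_unit b hb' t u 0 ht ltac:(lra)) as Au.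
  pose proof (word_map_unit b hb' t v 0 ht ltac:(lra)) as Av.
  pose proof (word_ratio_bounds b hb' t u ht) as ru.
  pose proof (word_ratio_bounds b hb' t v ht) as rv.
  pose proof B_bounds as HB.
  assert (HP : 0 <= t ^ S k <= 1)
    by (split; [apply pow_le; lra | rewrite <- (pow1 (S k)); apply pow_incr; lra]).
  rewrite (word_map_affine b t v y2) in E. rewrite (word_map_affine b t u y1) in Xu, E.
  fold Ru in ru; fold Rv in rv; fold B in E; unfold gap.
  set (P := t ^ S k) in *. set (ru' := word_ratio b t u) in *. set (rv' := word_ratio b t v) in *.
  assert (0 <= ru' * y1 <= Ru) by (split; nra).
  assert (0 <= rv' * y2 <= Rv) by (split; nra).
  (* [gap t = 8 B + B rv' y2 - P ru' y1] with correction terms in [0, Rv] and [0, Ru] *)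
  assert (0 <= P * (ru' * y1) <= Ru) by (split; nra).
  assert (0 <= B * (rv' * y2) <= Rv) by (split; nra).
  split; nra.
Qed.

Lemma gap_growth t1 t2 : 0 <= t1 <= t2 -> t2 <= 1/9 -> 8 * B <= t1 ^ k ->
  7 * t1 ^ k * (t2 - t1) <= gap t2 - gap t1.
Proof.
  intros ht12 ht2 HBQ.
  assert (hb' : 0 <= b <= 1/9) by lra.
  pose proof (word_map_unit b hb' t2 u 0 ltac:(lra) ltac:(lra)) as Au2.
  pose proof (word_map_lipschitz b hb' t1 t2 u 0 ht12 ht2 ltac:(lra)) as Lu.
  pose proof (word_map_lipschitz b hb' t1 t2 v 0 ht12 ht2 ltac:(lra)) as Lv.
  pose proof B_bounds as HB.
  unfold gap; cbn [pow].
  set (Q := t1 ^ k) in *. set (D := t2 - t1).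
  assert (HQ : 0 <= Q) by (apply pow_le; lra).
  assert (HQ2 : Q <= t2 ^ k) by (apply pow_incr; lra).
  set (A1 := word_map b t1 u 0) in *. set (A2 := word_map b t2 u 0) in *.
  set (V1 := word_map b t1 v 0) in *. set (V2 := word_map b t2 v 0) in *.
  (* the three terms of [(P2 - P1) (A2 + 8) + P1 (A2 - A1) - B (V2 - V1)] *)
  assert (T1 : 8 * (Q * D) <= (t2 * t2 ^ k - t1 * Q) * (A2 + 8)).
  { assert (t2 * Q <= t2 * t2 ^ k) by (apply Rmult_le_compat_l; lra).
    assert (HQD : 0 <= Q * D) by (apply Rmult_le_pos; unfold D; lra).
    assert (Q * D <= t2 * t2 ^ k - t1 * Q) by (unfold D; lra).
    assert (Q * D * 8 <= Q * D * (A2 + 8)) by (apply Rmult_le_compat_l; lra).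
    assert (Q * D * (A2 + 8) <= (t2 * t2 ^ k - t1 * Q) * (A2 + 8))
      by (apply Rmult_le_compat_r; lra).
    lra. }
  assert (HQD : 0 <= Q * D) by (apply Rmult_le_pos; unfold D; lra).
  assert (T2 : - (1/8) * (Q * D) <= t1 * Q * (A2 - A1)).
  { assert (t1 * Q * (- (9/8 * D)) <= t1 * Q * (A2 - A1))
      by (apply Rmult_le_compat_l; [apply Rmult_le_pos|]; unfold D; lra).
    assert (t1 * (Q * D) <= 1/9 * (Q * D)) by (apply Rmult_le_compat_r; lra).
    lra. }
  assert (T3 : B * (V2 - V1) <= (9/64) * (Q * D)).
  { assert (B * (V2 - V1) <= B * (9/8 * D)) by (apply Rmult_le_compat_l; unfold D; lra).
    assert (B * D <= Q / 8 * D) by (apply Rmult_le_compat_r; unfold D; lra).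
    lra. }
  unfold D in *; lra.
Qed.

Lemma coincidence_diameter t1 t2 :
  coincidence b k m u v t1 -> coincidence b k m u v t2 -> t1 <= t2 ->
  t2 - t1 <= (Ru + Rv) / B.
Proof.
  intros H1 H2 Ht12.
  destruct (coincidence_gap t1 H1) as [HP1 G1]. destruct (coincidence_gap t2 H2) as [_ G2].
  destruct H1 as [ht1 _]. destruct H2 as [ht2 _].
  pose proof B_bounds as HB.
  assert (HQ : 8 * B <= t1 ^ k).
  { cbn [pow] in HP1; assert (0 <= t1 ^ k) by (apply pow_le; lra); nra. }
  pose proof (gap_growth t1 t2 ltac:(lra) ltac:(lra) HQ).
  assert (B * (t2 - t1) <= t1 ^ k / 8 * (t2 - t1)) by (apply Rmult_le_compat_r; lra).
  apply (Rmult_le_reg_r B); [lra|].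
  unfold Rdiv; rewrite Rmult_assoc, Rinv_l, Rmult_1_r by lra. lra.
Qed.

End Transversality.

Lemma exists_pow_lt q eps : 0 <= q < 1 -> 0 < eps -> exists n, q ^ n < eps.
Proof.
  intros Hq Heps. destruct (pow_lt_1_zero q ltac:(rewrite Rabs_right; lra) eps Heps) as [n Hn].
  exists n. specialize (Hn n (le_n n)). rewrite Rabs_right in Hn; [exact Hn|].
  apply Rle_ge, pow_le; lra.
Qed.

Lemma Rle_0_of_le_pow_contraction x D q :
  0 <= q < 1 -> (forall n, x <= D * q ^ n) -> x <= 0.
Proof.
  intros Hq Hx. destruct (Rle_or_lt x 0) as [|Hpos]; [assumption|exfalso].
  assert (HD : 0 < D) by (specialize (Hx O); simpl in Hx; lra).
  destruct (exists_pow_lt q (x / D) Hq) as [n Hn]; [apply Rdiv_lt_0_compat; lra|].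
  specialize (Hx n). apply (Rmult_lt_compat_l D) in Hn; [|lra].
  replace (D * (x / D)) with x in Hn by (field; lra). lra.
Qed.

Section Attractor.
Variables (b t : R) (K : R -> Prop).
Hypotheses (hb : 0 < b < 1/9) (ht : 0 < t < 1/9) (HK : is_attractor b t K).

Lemma attractor_cover y : K y -> img (S1 t) K y \/ img (S2 b) K y \/ img S3 K y.
Proof. apply (proj2 (proj2 HK)). Qed.

Lemma attractor_S1 x : K x -> K (t * x).
Proof. intros Hx. apply (proj2 (proj2 HK)). left; exists x; auto. Qed.

Lemma attractor_S2 x : K x -> K (b * x).
Proof. intros Hx. apply (proj2 (proj2 HK)). right; left; exists x; auto. Qed.

Lemma attractor_pow_S1 n x : K x -> K (t ^ n * x).
Proof.
  intros Hx; induction n as [|n IH]; simpl; [rewrite Rmult_1_l; exact Hx|].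
  rewrite Rmult_assoc; apply attractor_S1, IH.
Qed.

Lemma attractor_pow_S2 n x : K x -> K (b ^ n * x).
Proof.
  intros Hx; induction n as [|n IH]; simpl; [rewrite Rmult_1_l; exact Hx|].
  rewrite Rmult_assoc; apply attractor_S2, IH.
Qed.

(* Each map sends [-e, 1 + e] into [-e/9, 1 + e/9], so K lies in all these intervals. *)
Lemma attractor_in_unit y : K y -> 0 <= y <= 1.
Proof.
  destruct (compact_P1 K (proj1 (proj2 HK))) as [m [M HmM]].
  set (D := Rabs m + Rabs M).
  assert (Hshrink : forall n z, K z -> - (D * (/9) ^ n) <= z <= 1 + D * (/9) ^ n).
  { induction n as [|n IH]; intros z Hz.
    - specialize (HmM z Hz). pose proof (Rle_abs M). pose proof (Rle_abs (- m)).
      rewrite Rabs_Ropp in *. pose proof (Rabs_pos m). pose proof (Rabs_pos M).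
      unfold D; simpl; lra.
    - assert (0 <= D * (/9) ^ n)
        by (apply Rmult_le_pos; [unfold D; pose proof (Rabs_pos m); pose proof (Rabs_pos M); lra
                                | apply pow_le; lra]).
      replace (D * (/9) ^ S n) with (D * (/9) ^ n / 9) by (simpl; field).
      destruct (attractor_cover z Hz) as [[x [Hx ->]] | [[x [Hx ->]] | [x [Hx ->]]]];
        specialize (IH x Hx); unfold S1, S2, S3; split; nra. }
  intros Hy. split.
  - enough (- y <= 0) by lra.
    apply (Rle_0_of_le_pow_contraction _ D (/9)); [lra|].
    intro n; specialize (Hshrink n y Hy); lra.
  - enough (y - 1 <= 0) by lra.
    apply (Rle_0_of_le_pow_contraction _ D (/9)); [lra|].
    intro n; specialize (Hshrink n y Hy); lra.
Qed.

Lemma attractor_has_0 : K 0.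
Proof.
  destruct HK as [[x0 Hx0] [Hc _]].
  apply NNPP; intros H0.
  destruct (compact_P2 K Hc 0 H0) as [del Hdel].
  destruct (exists_pow_lt t del ltac:(lra) (cond_pos del)) as [n Hn].
  apply (Hdel (t ^ n * x0)); [| apply attractor_pow_S1, Hx0].
  pose proof (attractor_in_unit x0 Hx0). assert (0 <= t ^ n) by (apply pow_le; lra).
  unfold disc; rewrite Rminus_0_r, Rabs_right by nra. nra.
Qed.

Lemma attractor_word_decomp n y :
  K y -> exists u y', length u = n /\ K y' /\ y = word_map b t u y'.
Proof.
  revert y; induction n as [|n IH]; intros y Hy; [exists [], y; auto|].
  destruct (attractor_cover y Hy) as [[x [Hx ->]] | [[x [Hx ->]] | [x [Hx ->]]]];
    destruct (IH x Hx) as [u [y' [Hu [Hy' ->]]]];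
    [exists (br1 :: u) | exists (br2 :: u) | exists (br3 :: u)];
    exists y'; simpl; rewrite Hu; auto.
Qed.

End Attractor.

Lemma strip_leading_power (K : R -> Prop) (c d : R) :
  0 < c < 1 -> (forall y, K y -> 0 <= y <= 1) ->
  (forall y, K y -> img (S1 c) K y \/ img (S1 d) K y \/ img S3 K y) ->
  forall y, K y -> y = 0 \/ exists k x, K x /\ (y = c ^ k * (d * x) \/ y = c ^ k * S3 x).
Proof.
  intros Hc Hunit Hcover.
  assert (Hstrip : forall n y, K y -> c ^ n < y ->
            exists k x, K x /\ (y = c ^ k * (d * x) \/ y = c ^ k * S3 x)).
  { induction n as [|n IH]; intros y Hy Hn; [specialize (Hunit y Hy); simpl in Hn; lra|].
    destruct (Hcover y Hy) as [[x [Hx ->]] | [[x [Hx ->]] | [x [Hx ->]]]].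
    - unfold S1 in Hn |- *; simpl in Hn.
      assert (c ^ n < x) by (apply (Rmult_lt_reg_l c); lra).
      destruct (IH x Hx ltac:(assumption)) as [k [w [Hw E]]].
      exists (S k), w; split; [exact Hw|]; simpl; destruct E as [->| ->]; [left|right]; ring.
    - exists O, x; split; [exact Hx|]; left; unfold S1; simpl; ring.
    - exists O, x; split; [exact Hx|]; right; simpl; ring. }
  intros y Hy. destruct (Req_dec y 0) as [|Hy0]; [left; assumption|right].
  pose proof (Hunit y Hy).
  destruct (exists_pow_lt c y ltac:(lra) ltac:(lra)) as [n Hn].
  exact (Hstrip n y Hy Hn).
Qed.

(* The parameters t for which some point of S_{1,t}^{k+1} S_3(K_t) equals a point of
   S_2^{m+1} S_3(K_t). *)
Definition exceptional (b : R) (k m : nat) (t : R) : Prop :=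
  0 < t < 1/9 /\ exists K, is_attractor b t K /\
    exists w1 w2, K w1 /\ K w2 /\ t ^ S k * (w1 + 8) = b ^ S m * (w2 + 8).

Lemma img_S1_S2 b t (K : R -> Prop) z : K z -> img (S1 t) (img (S2 b) K) (t * (b * z)).
Proof. intros Hz; exists (b * z); split; [exists z; auto | reflexivity]. Qed.

Lemma attractor_overlap b t K x1 x2 :
  0 < b < 1/9 -> 0 < t < 1/9 -> is_attractor b t K ->
  K x1 -> K x2 -> t * x1 = b * x2 ->
  img (S1 t) (img (S2 b) K) (t * x1) \/ exists k m, exceptional b k m t.
Proof.
  intros hb ht HK Hx1 Hx2 Heq.
  pose proof (attractor_in_unit b t K hb ht HK) as Hunit.
  pose proof (attractor_cover b t K HK) as Hcover.
  destruct (strip_leading_power K t b ltac:(lra) Hunit Hcover x1 Hx1)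
    as [-> | (k & w1 & Hw1 & [E1 | E1])].
  - left; replace (t * 0) with (t * (b * 0)) by ring.
    apply img_S1_S2, (attractor_has_0 b t K hb ht HK).
  - left; rewrite E1; replace (t * (t ^ k * (b * w1))) with (t * (b * (t ^ k * w1))) by ring.
    apply img_S1_S2, (attractor_pow_S1 b t K HK), Hw1.
  - assert (Hcover' : forall y, K y -> img (S1 b) K y \/ img (S1 t) K y \/ img S3 K y)
      by (intros y Hy; destruct (Hcover y Hy) as [H|[H|H]]; auto).
    destruct (strip_leading_power K b t ltac:(lra) Hunit Hcover' x2 Hx2)
      as [-> | (m & w2 & Hw2 & [E2 | E2])].
    + left; rewrite Heq; replace (b * 0) with (t * (b * 0)) by ring.
      apply img_S1_S2, (attractor_has_0 b t K hb ht HK).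
    + left; rewrite Heq, E2.
      replace (b * (b ^ m * (t * w2))) with (t * (b * (b ^ m * w2))) by ring.
      apply img_S1_S2, (attractor_pow_S2 b t K HK), Hw2.
    + right; exists k, m; split; [exact ht|]; exists K; split; [exact HK|].
      exists w1, w2; split; [exact Hw1|]; split; [exact Hw2|].
      rewrite E1, E2 in Heq; unfold S3 in Heq; simpl.
      replace (t * t ^ k * (w1 + 8)) with (9 * (t * (t ^ k * ((w1 + 8) / 9)))) by field.
      rewrite Heq; field.
Qed.

Lemma exceptional_coincidence b k m t n :
  0 < b < 1/9 -> exceptional b k m t ->
  exists u v, In u (words n) /\ In v (words n) /\ coincidence b k m u v t.
Proof.
  intros hb [ht [K [HK [w1 [w2 [Hw1 [Hw2 E]]]]]]].
  destruct (attractor_word_decomp b t K HK n w1 Hw1) as [u [y1 [Hu [Hy1 ->]]]].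
  destruct (attractor_word_decomp b t K HK n w2 Hw2) as [v [y2 [Hv [Hy2 ->]]]].
  exists u, v; split; [rewrite <- Hu; apply In_words_length|].
  split; [rewrite <- Hv; apply In_words_length|].
  split; [lra|]. exists y1, y2.
  split; [exact (attractor_in_unit b t K hb ht HK y1 Hy1)|].
  split; [exact (attractor_in_unit b t K hb ht HK y2 Hy2)|].
  exact E.
Qed.

(* For a pair (u, v) of words of length n, the coincidence parameters form a set of diameter
   at most (r_u + r_v) / b^(m+1); the ratios r_u of the 3^n words sum to (2/9 + b)^n, so the
   total is O((3 (2/9 + b))^n), which tends to 0. *)
Lemma exceptional_jordan_null b k m : 0 < b < 1/9 -> jordan_null (exceptional b k m).
Proof.
  intros hb.
  assert (hb' : 0 <= b <= 1/9) by lra.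
  set (B := b ^ S m). assert (HB : 0 < B) by (apply pow_lt; lra).
  set (Rw := word_ratio b (1/9)).
  apply (jordan_null_of_diameter_bounds _ (fun p => coincidence b k m (fst p) (snd p))
           (fun p => (Rw (fst p) + Rw (snd p)) / B)).
  - intros [u v]; cbn [fst snd].
    pose proof (word_ratio_bounds b hb' (1/9) u ltac:(lra)).
    pose proof (word_ratio_bounds b hb' (1/9) v ltac:(lra)).
    unfold Rdiv; apply Rmult_le_pos; [unfold Rw; lra | apply Rlt_le, Rinv_0_lt_compat, HB].
  - intros [u v] x y; apply coincidence_diameter, hb.
  - intros eps Heps. set (sg := 1/9 + b + /9).
    destruct (exists_pow_lt (3 * sg) (eps * B / 2)) as [n Hn];
      [unfold sg; lra | apply Rdiv_lt_0_compat; [apply Rmult_lt_0_compat|]; lra|].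
    exists (list_prod (words n) (words n)). split.
    + intros t Ht. destruct (exceptional_coincidence b k m t n hb Ht) as (u & v & Hu & Hv & Huv).
      exists (u, v); split; [apply in_prod; assumption | exact Huv].
    + set (f u := / B * Rw u).
      rewrite (sumL_ext _ (fun p => f (fst p) + f (snd p))) by (intro; unfold f, Rdiv; ring).
      rewrite sumL_list_prod; unfold f; rewrite sumL_scal.
      unfold Rw; rewrite sumL_word_ratio, length_words.
      fold sg. rewrite Rpow_mult_distr in Hn.
      apply (Rmult_le_reg_r B); [exact HB|].
      replace ((3 ^ n * (/ B * sg ^ n) + 3 ^ n * (/ B * sg ^ n)) * B) with (2 * (3 ^ n * sg ^ n))
        by (field; lra).
      lra.
Qed.

Theorem proposition9 (b : R) (hb : 0 < b < 1/9) :
  exists N : R -> Prop, lebesgue_null N /\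
    forall t : R, 0 < t < 1/9 -> ~ N t ->
      forall K : R -> Prop, is_attractor b t K ->
        forall y : R,
          (img (S1 t) K y /\ img (S2 b) K y) <-> img (S1 t) (img (S2 b) K) y.
Proof.
  exists (fun t => exists j, exceptional b (fst (Cantor.of_nat j)) (snd (Cantor.of_nat j)) t).
  split.
  { apply lebesgue_null_union_jordan_null; intro j; apply exceptional_jordan_null, hb. }
  intros t ht Hgood K HK y. split.
  - intros [[x1 [Hx1 ->]] [x2 [Hx2 Heq]]].
    destruct (attractor_overlap b t K x1 x2 hb ht HK Hx1 Hx2 Heq) as [H | (k & m & Hex)];
      [exact H | exfalso].
    apply Hgood; exists (Cantor.to_nat (k, m)); rewrite Cantor.cancel_of_to; exact Hex.
  - intros [x [[z [Hz ->]] ->]]. split.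
    + exists (b * z); split; [apply (attractor_S2 b t K HK), Hz | reflexivity].
    + exists (t * z); split; [apply (attractor_S1 b t K HK), Hz | unfold S1, S2; ring].
Qed.
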